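(* Let $\alpha^s=\alpha^s(t,x)$ and $\beta^s=\beta^s(t,x)$, $s=1,\dots,p$, be smooth solutions of the backward heat equation ($\alpha^s_t+\alpha^s_{xx}=0$, $\beta^s_t+\beta^s_{xx}=0$) satisfying $\sum_{s=1}^p(\alpha^s_x\beta^s-\alpha^s\beta^s_x)=0$. Then for all integers $i,j\ge0$, $$\sum_{s=1}^p\bigl(\alpha^s_i\beta^s_j-\alpha^s_j\beta^s_i\bigr)=0,$$ where the subscripts $i,j$ denote the $i$-th and $j$-th order derivatives with respect to $x$. *)

From Stdlib Require Import Reals.
From Coquelicot Require Import Coquelicot.
Open Scope R_scope.

(* Iterated partial derivatives of f : R -> R -> R (first argument t, second x).
   A list of directions: true = d/dt, false = d/dx; the head is applied last. *)
Fixpoint pd (l : list bool) (f : R -> R -> R) : R -> R -> R :=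
  match l with
  | nil => f
  | cons b l' =>
      let g := pd l' f in
      if b then (fun t x => Derive (fun t' => g t' x) t)
      else (fun t x => Derive (fun x' => g t x') x)
  end.

Definition smooth2 (f : R -> R -> R) : Prop :=
  forall l : list bool,
    (forall t x, ex_derive (fun t' => pd l f t' x) t /\
                 ex_derive (fun x' => pd l f t x') x) /\
    (forall t x, continuous (fun q : R * R => pd l f (fst q) (snd q)) (t, x)).

Definition dx (i : nat) (f : R -> R -> R) (t x : R) : R :=
  Derive_n (fun x' => f t x') i x.

Definition dt (f : R -> R -> R) (t x : R) : R :=
  Derive (fun t' => f t' x) t.

Definition backward_heat (f : R -> R -> R) : Prop :=
  forall t x, dt f t x + dx 2 f t x = 0.

(* finite sum over s = 0, ..., p-1 (the paper's s = 1..p) *)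
Fixpoint sumR (p : nat) (g : nat -> R) : R :=
  match p with
  | O => 0
  | S n => sumR n g + g n
  end.

(* Write W i j := sum_s (alpha^s_i beta^s_j - alpha^s_j beta^s_i).  Differentiating the
   summands gives d_x W i j = W (i+1) j + W i (j+1), and the backward heat equation gives
   d_t W i j = -(W (i+2) j + W i (j+2)).  If all W i j with i + j = n and i + j = n + 1
   vanish identically, these two relations give, at level n + 2, that consecutive terms
   W (n+2-k) k are opposite while W (n+2) 0 + W n 2 = 0; together they force level n + 2
   to vanish.  Levels 0 and 1 vanish by antisymmetry and by hypothesis. *)
From Stdlib Require Import Reals Lra Lia List.
From Coquelicot Require Import Coquelicot.
Open Scope R_scope.

Lemma is_derive_vanishing (h : R -> R) (y l : R) :
  (forall z, h z = 0) -> is_derive h y l -> l = 0.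
Proof.
  intros Hz Hd. apply is_derive_unique in Hd. rewrite <- Hd.
  rewrite (Derive_ext h (fun _ => 0)) by exact Hz. apply Derive_const.
Qed.

Lemma is_derive_cross (f1 f2 f3 f4 : R -> R) (d1 d2 d3 d4 y : R) :
  is_derive f1 y d1 -> is_derive f2 y d2 -> is_derive f3 y d3 -> is_derive f4 y d4 ->
  is_derive (fun z => f1 z * f2 z - f3 z * f4 z) y
    (d1 * f2 y + f1 y * d2 - (d3 * f4 y + f3 y * d4)).
Proof.
  intros H1 H2 H3 H4.
  apply (is_derive_minus (fun z => f1 z * f2 z) (fun z => f3 z * f4 z)).
  - apply (is_derive_mult f1 f2); [exact H1 | exact H2 | intros; apply Rmult_comm].
  - apply (is_derive_mult f3 f4); [exact H3 | exact H4 | intros; apply Rmult_comm].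
Qed.

Lemma alternating_zero (u : nat -> R) (m : nat) :
  u 0%nat = 0 -> (forall k, (k < m)%nat -> u k + u (S k) = 0) ->
  forall k, (k <= m)%nat -> u k = 0.
Proof.
  intros H0 Hstep k. induction k as [|k IH]; intros Hk; [exact H0|].
  pose proof (Hstep k ltac:(lia)) as E. rewrite IH in E by lia. lra.
Qed.

Lemma sumR_ext (n : nat) (g h : nat -> R) :
  (forall s, (s < n)%nat -> g s = h s) -> sumR n g = sumR n h.
Proof.
  induction n as [|n IH]; intros H; simpl; [reflexivity|].
  rewrite IH by (intros; apply H; lia). rewrite H by lia. reflexivity.
Qed.

Lemma sumR_plus (n : nat) (g h : nat -> R) :
  sumR n (fun s => g s + h s) = sumR n g + sumR n h.
Proof. induction n as [|n IH]; simpl; [lra|]. rewrite IH. lra. Qed.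

Lemma sumR_opp (n : nat) (g : nat -> R) : sumR n (fun s => - g s) = - sumR n g.
Proof. induction n as [|n IH]; simpl; [lra|]. rewrite IH. lra. Qed.

Lemma is_derive_sumR (n : nat) (g : nat -> R -> R) (g' : nat -> R) (y : R) :
  (forall s, (s < n)%nat -> is_derive (g s) y (g' s)) ->
  is_derive (fun z => sumR n (fun s => g s z)) y (sumR n g').
Proof.
  induction n as [|n IH]; intros H; simpl.
  - exact (is_derive_const (K:=R_AbsRing) (V:=R_NormedModule) 0 y).
  - apply (is_derive_plus (fun z => sumR n (fun s => g s z)) (g n)).
    + apply IH. intros; apply H; lia.
    + apply H; lia.
Qed.

Section XDerivatives.

Variable f : R -> R -> R.
Hypothesis f_smooth : smooth2 f.

Lemma pd_repeat_false (i : nat) (t x : R) : pd (repeat false i) f t x = dx i f t x.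
Proof.
  revert t x; induction i as [|i IH]; intros t x; [reflexivity|].
  change (Derive (fun x' => pd (repeat false i) f t x') x
          = Derive (fun y => dx i f t y) x).
  apply Derive_ext. intro y. apply IH.
Qed.

Lemma is_derive_dx_x (i : nat) (t x : R) :
  is_derive (fun x' => dx i f t x') x (dx (S i) f t x).
Proof.
  apply Derive_correct.
  apply (ex_derive_ext (fun x' => pd (repeat false i) f t x')).
  - intro; apply pd_repeat_false.
  - exact (proj2 (proj1 (f_smooth (repeat false i)) t x)).
Qed.

Lemma ex_derive_dx_t (i : nat) (t x : R) : ex_derive (fun t' => dx i f t' x) t.
Proof.
  apply (ex_derive_ext (fun t' => pd (repeat false i) f t' x)).
  - intro; apply pd_repeat_false.
  - exact (proj1 (proj1 (f_smooth (repeat false i)) t x)).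
Qed.

Lemma Derive_t_dx_S (i : nat) (t x : R) :
  Derive (fun t' => dx (S i) f t' x) t
  = Derive (fun x' => Derive (fun t' => dx i f t' x') t) x.
Proof.
  set (g := pd (repeat false i) f).
  transitivity (Derive (fun t' => Derive (fun x' => g t' x') x) t).
  { apply Derive_ext. intro t'. apply Derive_ext. intro y.
    unfold g. rewrite pd_repeat_false. reflexivity. }
  rewrite (Schwarz g t x).
  - apply Derive_ext. intro y. apply Derive_ext. intro t'.
    unfold g. apply pd_repeat_false.
  - exists (mkposreal 1 Rlt_0_1). intros u v _ _.
    destruct (f_smooth (repeat false i)) as [H0 _].
    destruct (f_smooth (false :: repeat false i)) as [Hx _].
    destruct (f_smooth (true :: repeat false i)) as [Ht _].
    split; [exact (proj1 (H0 u v))|]. split; [exact (proj2 (H0 u v))|].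
    split; [exact (proj1 (Hx u v)) | exact (proj2 (Ht u v))].
  - apply continuity_2d_pt_filterlim.
    exact (proj2 (f_smooth (true :: false :: repeat false i)) t x).
  - apply continuity_2d_pt_filterlim.
    exact (proj2 (f_smooth (false :: true :: repeat false i)) t x).
Qed.

Hypothesis f_heat : backward_heat f.

(* Time derivatives commute with x-derivatives, so u_t = -u_xx passes to every d_x^i u. *)
Lemma Derive_t_dx (i : nat) (t x : R) :
  Derive (fun t' => dx i f t' x) t = - dx (S (S i)) f t x.
Proof.
  revert t x; induction i as [|i IH]; intros t x.
  - pose proof (f_heat t x) as H. unfold dt in H.
    change (Derive (fun t' => f t' x) t = - dx 2 f t x). lra.
  - rewrite Derive_t_dx_S.
    rewrite (Derive_ext _ (fun x' => - dx (S (S i)) f t x')) by apply IH.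
    apply Derive_opp.
Qed.

Lemma is_derive_dx_t (i : nat) (t x : R) :
  is_derive (fun t' => dx i f t' x) t (- dx (S (S i)) f t x).
Proof. rewrite <- Derive_t_dx. apply Derive_correct, ex_derive_dx_t. Qed.

End XDerivatives.

Section Vanishing.

Variable W : nat -> nat -> R -> R -> R.
Hypothesis W_anti : forall i j t x, W j i t x = - W i j t x.
Hypothesis W_derive_x : forall i j t x,
  is_derive (fun x' => W i j t x') x (W (S i) j t x + W i (S j) t x).
Hypothesis W_derive_t : forall i j t x,
  is_derive (fun t' => W i j t' x) t (- (W (S (S i)) j t x + W i (S (S j)) t x)).

Definition level_zero (n : nat) : Prop :=
  forall i j t x, (i + j = n)%nat -> W i j t x = 0.

Lemma level_zero_derive_x (n : nat) : level_zero n ->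
  forall i j t x, (i + j = n)%nat -> W (S i) j t x + W i (S j) t x = 0.
Proof.
  intros Hn i j t x Hij.
  apply (is_derive_vanishing (fun x' => W i j t x') x); [|apply W_derive_x].
  intro; apply Hn, Hij.
Qed.

Lemma level_zero_derive_t (n : nat) : level_zero n ->
  forall i j t x, (i + j = n)%nat -> W (S (S i)) j t x + W i (S (S j)) t x = 0.
Proof.
  intros Hn i j t x Hij.
  assert (E : - (W (S (S i)) j t x + W i (S (S j)) t x) = 0).
  { apply (is_derive_vanishing (fun t' => W i j t' x) t); [|apply W_derive_t].
    intro; apply Hn, Hij. }
  lra.
Qed.

Lemma level_zero_SS (n : nat) :
  level_zero n -> level_zero (S n) -> level_zero (S (S n)).
Proof.
  intros Hn HSn i j t x Hij.
  assert (Hcorner : W (S (S n)) 0 t x = 0).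
  { pose proof (level_zero_derive_x _ HSn (S n) 0 t x ltac:(lia)).
    pose proof (level_zero_derive_x _ HSn n 1 t x ltac:(lia)).
    pose proof (level_zero_derive_t _ Hn n 0 t x ltac:(lia)).
    lra. }
  replace i with (S (S n) - j)%nat by lia.
  apply (alternating_zero (fun k => W (S (S n) - k) k t x) (S (S n))); [exact Hcorner | | lia].
  intros k Hk.
  pose proof (level_zero_derive_x _ HSn (S (S n) - S k) k t x ltac:(lia)) as E.
  replace (S (S (S n) - S k)) with (S (S n) - k)%nat in E by lia. exact E.
Qed.

Hypothesis W_1_0 : forall t x, W 1 0 t x = 0.

Lemma level_zero_all (n : nat) : level_zero n.
Proof.
  assert (H : level_zero n /\ level_zero (S n)).
  { induction n as [|n [IH1 IH2]].
    - split; intros i j t x Hij.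
      + assert (i = 0%nat) by lia. assert (j = 0%nat) by lia. subst.
        pose proof (W_anti 0 0 t x). lra.
      + destruct i as [|[|i]]; [| |lia].
        * replace j with 1%nat by lia. rewrite W_anti, W_1_0. lra.
        * replace j with 0%nat by lia. apply W_1_0.
    - split; [exact IH2 | exact (level_zero_SS n IH1 IH2)]. }
  exact (proj1 H).
Qed.

End Vanishing.

Definition wronsk (p : nat) (a b : nat -> R -> R -> R) (i j : nat) (t x : R) : R :=
  sumR p (fun s => dx i (a s) t x * dx j (b s) t x - dx j (a s) t x * dx i (b s) t x).

Section Wronskian.

Variable p : nat.
Variables a b : nat -> R -> R -> R.
Hypothesis a_smooth : forall s, (s < p)%nat -> smooth2 (a s).
Hypothesis b_smooth : forall s, (s < p)%nat -> smooth2 (b s).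

Lemma wronsk_anti (i j : nat) (t x : R) : wronsk p a b j i t x = - wronsk p a b i j t x.
Proof. unfold wronsk. rewrite <- sumR_opp. apply sumR_ext. intros; ring. Qed.

Lemma is_derive_wronsk_x (i j : nat) (t x : R) :
  is_derive (fun x' => wronsk p a b i j t x') x
    (wronsk p a b (S i) j t x + wronsk p a b i (S j) t x).
Proof.
  unfold wronsk. rewrite <- sumR_plus.
  erewrite sumR_ext; [apply is_derive_sumR|].
  - intros s Hs. apply is_derive_cross; apply is_derive_dx_x; auto.
  - intros; simpl; ring.
Qed.

Hypothesis a_heat : forall s, (s < p)%nat -> backward_heat (a s).
Hypothesis b_heat : forall s, (s < p)%nat -> backward_heat (b s).

Lemma is_derive_wronsk_t (i j : nat) (t x : R) :
  is_derive (fun t' => wronsk p a b i j t' x) t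
    (- (wronsk p a b (S (S i)) j t x + wronsk p a b i (S (S j)) t x)).
Proof.
  unfold wronsk. rewrite <- sumR_plus, <- sumR_opp.
  erewrite sumR_ext; [apply is_derive_sumR|].
  - intros s Hs. apply is_derive_cross; apply is_derive_dx_t; auto.
  - intros; simpl; ring.
Qed.

End Wronskian.

Theorem lemma5 (p : nat) (alpha beta : nat -> R -> R -> R)
  (Hsa : forall s, (s < p)%nat -> smooth2 (alpha s))
  (Hsb : forall s, (s < p)%nat -> smooth2 (beta s))
  (Hha : forall s, (s < p)%nat -> backward_heat (alpha s))
  (Hhb : forall s, (s < p)%nat -> backward_heat (beta s))
  (H0 : forall t x,
      sumR p (fun s => dx 1 (alpha s) t x * beta s t x
                       - alpha s t x * dx 1 (beta s) t x) = 0) :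
  forall (i j : nat) (t x : R),
    sumR p (fun s => dx i (alpha s) t x * dx j (beta s) t x
                     - dx j (alpha s) t x * dx i (beta s) t x) = 0.
Proof.
  intros i j t x.
  apply (level_zero_all (wronsk p alpha beta)) with (n := (i + j)%nat); auto.
  - apply wronsk_anti.
  - intros; apply is_derive_wronsk_x; auto.
  - intros; apply is_derive_wronsk_t; auto.
Qed.
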